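(* Let $\Delta_2=\{A=(a_{ij})\in SL_3(\mathfrak{o}) : a_{21}=a_{31}=0\}$. Then $$\Delta_2=\bigsqcup_{y\in Y(\mathfrak{o})}\ \bigsqcup_{d\in D(3)}\ \bigsqcup_{u\in U(3)} \varphi_2(y^{-1})\,d\,u\,\Gamma_\infty(3),$$ i.e. $\Delta_2$ is the union of the sets $\varphi_2(y^{-1})du\Gamma_\infty(3)$ and these sets are pairwise disjoint for distinct triples $(y,d,u)$.
   Context: Let $\omega=e^{2\pi i/3}$, $\mathfrak{o}=\mathbb{Z}[\omega]$, $\mathfrak{o}^\times$ its unit group. Fix representatives of nonzero elements modulo units (''$c\in(\mathfrak{o}-\{0\})/\mathfrak{o}^\times$'') and, for each nonzero $c$, representatives of $\mathfrak{o}/c\mathfrak{o}$ (''$a\in\mathfrak{o}/c\mathfrak{o}$''). $Y(\mathfrak{o})=\{\begin{pmatrix}a&b\\c&d\end{pmatrix}\in SL_2(\mathfrak{o}) : c\in(\mathfrak{o}-\{0\})/\mathfrak{o}^\times,\ a\in\mathfrak{o}/c\mathfrak{o}\}\cup\{I_2\}$. $\Gamma(3)=\{A\in SL_3(\mathfrak{o}):A\equiv I_3\pmod{3\mathfrak{o}}\}$ (entrywise), $\Gamma_\infty(3)$ its subgroup of upper triangular unipotent matrices. $D(3)$: diagonal $\mathrm{diag}(i,j,k)$ with $i,j,k\in\mathfrak{o}$, $ijk=1$. $U(3)$: matrices $\begin{pmatrix}1&\alpha&\beta\\&1&\gamma\\&&1\end{pmatrix}$ with $\alpha,\beta,\gamma\in\{0,1,2\}+\{0,1,2\}\omega$.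 For $y=\begin{pmatrix}a&b\\c&d\end{pmatrix}\in SL_2(\mathfrak{o})$, $\varphi_2(y)=\begin{pmatrix}1&0&0\\0&a&b\\0&c&d\end{pmatrix}$. *)

(* The ring o = Z[omega] is realized inside algC. *)
From HB Require Import structures.
From mathcomp Require Import all_boot all_order all_algebra all_field.
Set Implicit Arguments. Unset Strict Implicit. Unset Printing Implicit Defensive.
Import Order.TTheory GRing.Theory Num.Theory.
Local Open Scope ring_scope.

(* omega = e^{2 pi i/3} = (-1 + i sqrt 3)/2 *)
Definition omega : algC := (-1 + 'i * sqrtC 3) / 2.

Definition in_o (z : algC) : Prop :=
  exists a b : int, z = a%:~R + b%:~R * omega.

Definition unit_o (u : algC) : Prop :=
  in_o u /\ exists v, in_o v /\ u * v = 1.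

Definition SL_o (n : nat) (A : 'M[algC]_n) : Prop :=
  (forall i j, in_o (A i j)) /\ \det A = 1.

Definition i0 : 'I_3 := @Ordinal 3 0 isT.
Definition i1 : 'I_3 := @Ordinal 3 1 isT.
Definition i2 : 'I_3 := @Ordinal 3 2 isT.
Definition j0 : 'I_2 := @Ordinal 2 0 isT.
Definition j1 : 'I_2 := @Ordinal 2 1 isT.

Definition Delta2 (A : 'M[algC]_3) : Prop :=
  SL_o A /\ A i1 i0 = 0 /\ A i2 i0 = 0.

Definition is_rep_nonzero_mod_units (Crep : algC -> Prop) : Prop :=
  (forall c, Crep c -> in_o c /\ c != 0) /\
  (forall z, in_o z -> z != 0 ->
     exists c, Crep c /\ (exists u, unit_o u /\ z = u * c) /\
       forall c', Crep c' -> (exists u, unit_o u /\ z = u * c') -> c' = c).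

Definition is_rep_mod (c : algC) (Ac : algC -> Prop) : Prop :=
  (forall a, Ac a -> in_o a) /\
  (forall z, in_o z ->
     exists a, Ac a /\ (exists k, in_o k /\ z - a = k * c) /\
       forall a', Ac a' -> (exists k, in_o k /\ z - a' = k * c) -> a' = a).

Definition Yset (Crep : algC -> Prop) (Arep : algC -> algC -> Prop)
  (y : 'M[algC]_2) : Prop :=
  (SL_o y /\ Crep (y j1 j0) /\ Arep (y j1 j0) (y j0 j0)) \/ y = 1%:M.

Definition diag3 (i j k : algC) : 'M[algC]_3 :=
  \matrix_(r < 3, s < 3)
    (if r == s then (if r == i0 then i else if r == i1 then j else k) else 0).

Definition D3 (d : 'M[algC]_3) : Prop :=
  exists i j k, [/\ in_o i, in_o j, in_o k, i * j * k = 1 & d = diag3 i j k].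

Definition upper3 (al be ga : algC) : 'M[algC]_3 :=
  \matrix_(r < 3, s < 3)
    (if r == s then 1
     else if (r == i0) && (s == i1) then al
     else if (r == i0) && (s == i2) then be
     else if (r == i1) && (s == i2) then ga
     else 0).

Definition rep3 (z : algC) : Prop :=
  exists m n : nat, (m < 3)%N /\ (n < 3)%N /\ z = m%:R + n%:R * omega.

Definition U3 (u : 'M[algC]_3) : Prop :=
  exists al be ga, [/\ rep3 al, rep3 be, rep3 ga & u = upper3 al be ga].

Definition Gamma3 (A : 'M[algC]_3) : Prop :=
  SL_o A /\ forall i j, exists k, in_o k /\ (A - 1%:M) i j = 3 * k.

Definition Gamma_inf3 (A : 'M[algC]_3) : Prop :=
  Gamma3 A /\ exists al be ga, A = upper3 al be ga.

Definition phi2 (y : 'M[algC]_2) : 'M[algC]_3 := lift0_mx y.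

From HB Require Import structures.
From mathcomp Require Import all_boot all_order all_algebra all_field.
From mathcomp Require Import ring zify.
Import Order.TTheory GRing.Theory Num.Theory.
Local Open Scope ring_scope.

(* For A in Delta_2 the entry a_11 is a unit, so the column (a_22, a_32) is
   unimodular. Writing a_32 = w c with c the chosen representative, the row
   (c, -a_22/w) is unimodular; completing it to a matrix of SL_2(o) and
   reducing the top-left entry modulo c gives the y in Y(o) for which
   phi_2(y) A is upper triangular. That matrix has a unit diagonal d, and
   reducing the entries of d^-1 phi_2(y) A modulo 3 splits it as u g with
   u in U(3) and g in Gamma_infty(3).
   Conversely, the second column of phi_2(y^-1) d u g has lower part
   d_22 (y_22, -y_21), so two such decompositions of one matrix give
   associate bottom rows; the choice of representatives then forces y = y',
   and d, u are recovered from the entries modulo 3. *)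

Lemma ord2P (r : 'I_2) : r = j0 \/ r = j1.
Proof. by case: r => [[|[|r]] Hr] //; [left | right]; apply: val_inj. Qed.

Lemma ord3P (r : 'I_3) : [\/ r = i0, r = i1 | r = i2].
Proof.
by case: r => [[|[|[|r]]] Hr] //; [constructor 1 | constructor 2 | constructor 3]; apply: val_inj.
Qed.

Section ExplicitMatrices.
Context {R : comPzRingType}.

Definition mk2 (a b c d : R) : 'M[R]_2 := \matrix_(r, s)
  (if r == j0 then (if s == j0 then a else b) else (if s == j0 then c else d)).

Definition mk3 (a b c d e f g h k : R) : 'M[R]_3 := \matrix_(r, s)
  (if r == i0 then (if s == i0 then a else if s == i1 then b else c)
   else if r == i1 then (if s == i0 then d else if s == i1 then e else f)
   else (if s == i0 then g else if s == i1 then h else k)).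

Lemma mk2_eta (Y : 'M[R]_2) : Y = mk2 (Y j0 j0) (Y j0 j1) (Y j1 j0) (Y j1 j1).
Proof. by apply/matrixP => r s; rewrite mxE; case: (ord2P r) => ->; case: (ord2P s) => ->. Qed.

Lemma mk3_eta (A : 'M[R]_3) :
  A = mk3 (A i0 i0) (A i0 i1) (A i0 i2) (A i1 i0) (A i1 i1) (A i1 i2)
          (A i2 i0) (A i2 i1) (A i2 i2).
Proof. by apply/matrixP => r s; rewrite mxE; case: (ord3P r) => ->; case: (ord3P s) => ->. Qed.

Lemma mk3_inj a b c d e f g h k a' b' c' d' e' f' g' h' k' :
  mk3 a b c d e f g h k = mk3 a' b' c' d' e' f' g' h' k' ->
  [/\ a = a', b = b', c = c', d = d' & [/\ e = e', f = f', g = g', h = h' & k = k']].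
Proof.
move=> E; have entry r s : mk3 a b c d e f g h k r s = mk3 a' b' c' d' e' f' g' h' k' r s.
  by rewrite E.
move: (entry i0 i0) (entry i0 i1) (entry i0 i2) (entry i1 i0) (entry i1 i1).
move: (entry i1 i2) (entry i2 i0) (entry i2 i1) (entry i2 i2).
by rewrite !mxE.
Qed.

Lemma mk2_mul a b c d a' b' c' d' :
  mk2 a b c d *m mk2 a' b' c' d' =
  mk2 (a * a' + b * c') (a * b' + b * d') (c * a' + d * c') (c * b' + d * d').
Proof.
apply/matrixP => r s; rewrite !mxE !big_ord_recl big_ord0 !mxE addr0.
by case: (ord2P r) => ->; case: (ord2P s) => ->.
Qed.

Lemma mk3_mul a b c d e f g h k a' b' c' d' e' f' g' h' k' :
  mk3 a b c d e f g h k *m mk3 a' b' c' d' e' f' g' h' k' =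
  mk3 (a * a' + b * d' + c * g') (a * b' + b * e' + c * h') (a * c' + b * f' + c * k')
      (d * a' + e * d' + f * g') (d * b' + e * e' + f * h') (d * c' + e * f' + f * k')
      (g * a' + h * d' + k * g') (g * b' + h * e' + k * h') (g * c' + h * f' + k * k').
Proof.
apply/matrixP => r s; rewrite !mxE !big_ord_recl big_ord0 !mxE addr0 !addrA.
by case: (ord3P r) => ->; case: (ord3P s) => ->.
Qed.

Lemma mk2_1 : 1%:M = mk2 1 0 0 1.
Proof. by apply/matrixP => r s; rewrite !mxE; case: (ord2P r) => ->; case: (ord2P s) => ->. Qed.

Lemma det_mk2 a b c d : \det (mk2 a b c d) = a * d - b * c.
Proof.
rewrite (expand_det_row _ ord0) !big_ord_recl big_ord0 /cofactor !det_mx11 !mxE /=.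
by rewrite /bump /=; ring.
Qed.

Lemma det_mk3 a b c d e f g h k :
  \det (mk3 a b c d e f g h k) = a * (e * k - f * h) - b * (d * k - f * g) + c * (d * h - e * g).
Proof.
rewrite (expand_det_row _ i0) !big_ord_recl big_ord0 /cofactor.
rewrite !(expand_det_row _ ord0) !big_ord_recl !big_ord0 /cofactor !det_mx11 !mxE /=.
by rewrite /bump /=; ring.
Qed.

Lemma lift0_mx_mk3 (Y : 'M[R]_2) :
  lift0_mx Y = mk3 1 0 0 0 (Y j0 j0) (Y j0 j1) 0 (Y j1 j0) (Y j1 j1).
Proof.
have e0 : i0 = lshift 2 ord0 :> 'I_(1 + 2) by apply: val_inj.
have e1 : i1 = rshift 1 j0 :> 'I_(1 + 2) by apply: val_inj.
have e2 : i2 = rshift 1 j1 :> 'I_(1 + 2) by apply: val_inj.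
apply/matrixP => r s; rewrite [RHS]mxE.
case: (ord3P r) => ->; case: (ord3P s) => -> /=; rewrite ?e0 ?e1 ?e2.
all: by rewrite ?block_mxEul ?block_mxEur ?block_mxEdl ?block_mxEdr ?mxE.
Qed.

Lemma lift0_mx_mulmx_mk3 (Y : 'M[R]_2) a b c d e f g h k :
  lift0_mx Y *m mk3 a b c d e f g h k =
  mk3 a b c
      (Y j0 j0 * d + Y j0 j1 * g) (Y j0 j0 * e + Y j0 j1 * h) (Y j0 j0 * f + Y j0 j1 * k)
      (Y j1 j0 * d + Y j1 j1 * g) (Y j1 j0 * e + Y j1 j1 * h) (Y j1 j0 * f + Y j1 j1 * k).
Proof. by rewrite lift0_mx_mk3 mk3_mul; congr mk3; ring. Qed.

Lemma lift0_mxM n (A B : 'M[R]_n) : lift0_mx A *m lift0_mx B = lift0_mx (A *m B).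
Proof. by rewrite mulmx_block !mulmx0 !mul0mx !addr0 !add0r mulmx1. Qed.

Lemma lift0_mx1 n : lift0_mx (1%:M : 'M[R]_n) = 1%:M.
Proof. by rewrite /lift0_mx -scalar_mx_block. Qed.

Lemma det_lift0_mx n (A : 'M[R]_n) : \det (lift0_mx A) = \det A.
Proof. by rewrite det_ublock det1 mul1r. Qed.

Lemma det2E (Y : 'M[R]_2) : \det Y = Y j0 j0 * Y j1 j1 - Y j0 j1 * Y j1 j0.
Proof. by rewrite {1}(mk2_eta Y) det_mk2. Qed.

End ExplicitMatrices.

Section SL2.
Context {R : idomainType}.
Implicit Types y Y : 'M[R]_2.

Lemma invmx_SL2 Y : \det Y = 1 -> invmx Y = mk2 (Y j1 j1) (- Y j0 j1) (- Y j1 j0) (Y j0 j0).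
Proof.
rewrite det2E => dY.
have YZ : Y *m mk2 (Y j1 j1) (- Y j0 j1) (- Y j1 j0) (Y j0 j0) = 1%:M.
  by rewrite {1}(mk2_eta Y) mk2_mul mk2_1 -dY; congr mk2; ring.
have [Yu _] := mulmx1_unit YZ.
by rewrite -[RHS](mulKmx Yu) YZ mulmx1.
Qed.

Lemma SL2_topleft_congr y y' : \det y = 1 -> \det y' = 1 ->
  y j1 j0 = y' j1 j0 -> y j1 j1 = y' j1 j1 ->
  y j0 j0 - y' j0 j0 = (y' j0 j0 * y j0 j1 - y j0 j0 * y' j0 j1) * y j1 j0.
Proof.
rewrite !det2E => dy dy' ec ed.
rewrite -[y j0 j0 in LHS]mulr1 -[y' j0 j0 in LHS]mulr1 -{1}dy' -dy -ec -ed; ring.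
Qed.

Lemma SL2_eq y y' : \det y = 1 -> \det y' = 1 -> y j1 j0 != 0 ->
  y j0 j0 = y' j0 j0 -> y j1 j0 = y' j1 j0 -> y j1 j1 = y' j1 j1 -> y = y'.
Proof.
rewrite !det2E => dy dy' c0 ea ec ed.
have : (y j0 j1 - y' j0 j1) * y j1 j0 = 0.
  by rewrite -[RHS](subrr 1) -{1}dy' -dy ea ec ed; ring.
move/eqP; rewrite mulf_eq0 (negbTE c0) orbF subr_eq0 => /eqP eb.
by rewrite [LHS]mk2_eta [RHS]mk2_eta ea eb ec ed.
Qed.

End SL2.

Lemma omega_root : omega ^+ 2 + omega + 1 = 0.
Proof.
have sq3 : ('i * sqrtC 3) ^+ 2 = - 3 :> algC by rewrite exprMn sqrCi sqrtCK mulN1r.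
have two_omega : 2 * omega = -1 + 'i * sqrtC 3 by rewrite /omega mulrC divfK ?pnatr_eq0.
apply: (@mulfI _ 4); first by rewrite pnatr_eq0.
rewrite mulr0 (_ : _ * _ = (2 * omega) ^+ 2 + 2 * (2 * omega) + 4); last by ring.
rewrite two_omega.
have -> : forall x : algC, (-1 + x) ^+ 2 + 2 * (-1 + x) + 4 = x ^+ 2 + 3 by move=> x; ring.
by rewrite sq3 addNr.
Qed.

Lemma eq_mod_omega (t x y : algC) : x - y = t * (omega ^+ 2 + omega + 1) -> x = y.
Proof. by rewrite omega_root mulr0; apply: subr0_eq. Qed.

Lemma in_o_int (z : int) : in_o z%:~R.
Proof. by exists z, 0; rewrite mul0r addr0. Qed.

Lemma in_o_nat (n : nat) : in_o n%:R.
Proof. exact: (in_o_int n). Qed.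

Lemma in_o0 : in_o 0. Proof. exact: (in_o_nat 0). Qed.
Lemma in_o1 : in_o 1. Proof. exact: (in_o_nat 1). Qed.

Lemma in_o_omega : in_o omega.
Proof. by exists 0, 1; rewrite mul1r add0r. Qed.

#[local] Hint Resolve in_o0 in_o1 in_o_omega : core.

Lemma in_oD x y : in_o x -> in_o y -> in_o (x + y).
Proof.
move=> [a [b ->]] [c [d ->]]; exists (a + c), (b + d).
by rewrite !rmorphD /=; ring.
Qed.

Lemma in_oN x : in_o x -> in_o (- x).
Proof. by move=> [a [b ->]]; exists (- a), (- b); rewrite !rmorphN /=; ring. Qed.

Lemma in_oB x y : in_o x -> in_o y -> in_o (x - y).
Proof. by move=> hx hy; apply: in_oD => //; apply: in_oN. Qed.

Lemma in_oM x y : in_o x -> in_o y -> in_o (x * y).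
Proof.
move=> [a [b ->]] [c [d ->]]; exists (a * c - b * d), (a * d + b * c - b * d).
apply: (eq_mod_omega (b%:~R * d%:~R)).
by rewrite !(rmorphD, rmorphB, rmorphM) /=; ring.
Qed.

Arguments in_oD {x y}.
Arguments in_oN {x}.
Arguments in_oB {x y}.
Arguments in_oM {x y}.

(* Multiplying by the conjugate a + b omega^2 gives the norm a^2 - ab + b^2,
   and 4 (a^2 - ab + b^2) = (2a - b)^2 + 3 b^2. *)
Lemma omega_free (a b : int) : a%:~R + b%:~R * omega = 0 :> algC -> a = 0 /\ b = 0.
Proof.
move=> ab0.
have : (a * a - a * b + b * b)%:~R = 0 :> algC.
  rewrite -(mul0r (a%:~R + b%:~R * (-1 - omega))) -ab0.
  apply: (eq_mod_omega (b%:~R * b%:~R)).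
  by rewrite !(rmorphD, rmorphB, rmorphN, rmorphM) /=; ring.
move/eqP; rewrite intr_eq0 => /eqP norm0.
have : (2 * a - b) * (2 * a - b) + 3 * (b * b) = 0 by rewrite -[RHS](mulr0 4) -norm0; ring.
by move=> h; split; nia.
Qed.

Definition in_3o (z : algC) := exists k, in_o k /\ z = 3 * k.

Lemma in_3o_o {z} : in_3o z -> in_o z.
Proof. by move=> [k [hk ->]]; apply: in_oM (in_o_nat 3) hk. Qed.

Lemma in_3oD {x y} : in_3o x -> in_3o y -> in_3o (x + y).
Proof.
by move=> [k [hk ->]] [l [hl ->]]; exists (k + l); rewrite mulrDr; split; [apply: in_oD|].
Qed.

Lemma in_3oMl {x y} : in_o x -> in_3o y -> in_3o (x * y).
Proof. by move=> hx [k [hk ->]]; exists (x * k); rewrite mulrCA; split; [apply: in_oM|]. Qed.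

Lemma int_euclid3 (a : int) : exists (m : nat) (q : int), (m < 3)%N /\ a = 3 * q + m%:Z.
Proof.
have h3 : (3 : int) != 0 by [].
move: (divz_eq a 3) (modz_ge0 a h3) (ltz_pmod a (isT : (0 < 3 :> int))).
move: (a %/ 3)%Z (a %% 3)%Z => q [] // m a_eq _ m_lt.
by exists m, q; split; lia.
Qed.

Lemma rep3_o {r} : rep3 r -> in_o r.
Proof. by move=> [m [n [_ [_ ->]]]]; apply: in_oD (in_o_nat m) (in_oM (in_o_nat n) in_o_omega). Qed.

Lemma rep3_eq {r r' z z'} : rep3 r -> rep3 r' -> in_3o z -> in_3o z' -> r + z = r' + z' -> r = r'.
Proof.
move=> [m [n [hm [hn ->]]]] [m' [n' [hm' [hn' ->]]]] [_ [[x [y ->]] ->]] [_ [[x' [y' ->]] ->]] e.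
have [] : m%:Z - m'%:Z + 3 * (x - x') = 0 /\ n%:Z - n'%:Z + 3 * (y - y') = 0.
  apply: omega_free; rewrite -[RHS](subrr (m'%:R + n'%:R * omega + 3 * (x'%:~R + y'%:~R * omega))).
  by rewrite -{1}e !(rmorphD, rmorphB, rmorphM) /= ?pmulrn; ring.
by move=> em en; congr (_%:R + _%:R * omega); lia.
Qed.

Lemma rep3_is_rep_mod : is_rep_mod 3 rep3.
Proof.
split=> [r /rep3_o // | _ [a [b ->]]].
have [m [q [hm ->]]] := int_euclid3 a.
have [n [p [hn ->]]] := int_euclid3 b.
set k := q%:~R + p%:~R * omega.
have hk : in_o k by apply: in_oD (in_o_int q) (in_oM (in_o_int p) in_o_omega).
have hr : rep3 (m%:R + n%:R * omega) by exists m, n.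
have e : (3 * q + m%:Z)%:~R + (3 * p + n%:Z)%:~R * omega - (m%:R + n%:R * omega) = k * 3.
  by rewrite /k !rmorphD !rmorphM /= ?pmulrn; ring.
exists (m%:R + n%:R * omega); split=> //; split; first by exists k.
move=> r' hr' [k' [hk' e']]; apply: (rep3_eq hr' hr (z := 3 * k') (z' := 3 * k)).
- by exists k'.
- by exists k.
- by apply/subr0_eq; rewrite -(subrr (k * 3 - k' * 3)) -{1}e -{1}e'; ring.
Qed.

Lemma unit_o_neq0 {u} : unit_o u -> u != 0.
Proof.
move=> [_ [v [_ uv]]]; apply/eqP => u0.
by move: uv; rewrite u0 mul0r => /eqP; rewrite eq_sym oner_eq0.
Qed.

Lemma unit_o_prod3 {i j k} : in_o i -> in_o j -> in_o k -> i * j * k = 1 ->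
  [/\ unit_o i, unit_o j & unit_o k].
Proof.
move=> hi hj hk ijk; split; split=> //.
- by exists (j * k); split; [apply: in_oM | rewrite mulrA].
- by exists (i * k); split; [apply: in_oM | rewrite -ijk; ring].
- by exists (i * j); split; [apply: in_oM | rewrite -ijk; ring].
Qed.

Lemma is_rep_mod_eq {c Ac a a'} : is_rep_mod c Ac -> Ac a -> Ac a' ->
  (exists k, in_o k /\ a - a' = k * c) -> a = a'.
Proof.
move=> [Ao rep] ha ha' aa'; have [a0 [_ [_ uniq]]] := rep a (Ao a ha).
transitivity a0; last exact/esym/uniq.
by apply: uniq ha _; exists 0; rewrite subrr mul0r.
Qed.

Lemma is_rep_nonzero_mod_units_eq {Crep c c' u u'} : is_rep_nonzero_mod_units Crep ->
  Crep c -> Crep c' -> unit_o u -> unit_o u' -> u * c = u' * c' -> c = c'.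
Proof.
move=> [Co rep] hc hc' hu hu' e; have [co c_neq0] := Co c hc.
have [c0 [_ [_ uniq]]] := rep (u * c) (in_oM (proj1 hu) co) (mulf_neq0 (unit_o_neq0 hu) c_neq0).
by transitivity c0; [apply: uniq hc _; exists u | apply/esym/uniq => //; exists u'].
Qed.

Definition o_mx {m n} (A : 'M[algC]_(m, n)) := forall i j, in_o (A i j).

Lemma o_mx_mulmx {m n p} {A : 'M_(m, n)} {B : 'M_(n, p)} : o_mx A -> o_mx B -> o_mx (A *m B).
Proof.
move=> hA hB i j; rewrite mxE; apply: (big_ind in_o in_o0) => [x y|k _]; first exact: in_oD.
exact: in_oM.
Qed.

Lemma o_mx_mk2 a b c d : in_o a -> in_o b -> in_o c -> in_o d -> o_mx (mk2 a b c d).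
Proof. by move=> *; move=> r s; rewrite mxE; case: (ord2P r) => ->; case: (ord2P s) => ->. Qed.

Lemma o_mx_mk3 a b c d e f g h k :
  in_o a -> in_o b -> in_o c -> in_o d -> in_o e -> in_o f -> in_o g -> in_o h -> in_o k ->
  o_mx (mk3 a b c d e f g h k).
Proof. by move=> *; move=> r s; rewrite mxE; case: (ord3P r) => ->; case: (ord3P s) => ->. Qed.

Lemma o_mx_phi2 {Y} : o_mx Y -> o_mx (phi2 Y).
Proof. by move=> hY; rewrite /phi2 lift0_mx_mk3; exact: o_mx_mk3. Qed.

Lemma o_mx_invmx {y : 'M[algC]_2} : SL_o y -> o_mx (invmx y).
Proof. by move=> [hy dy]; rewrite invmx_SL2 //; apply: o_mx_mk2 => //; apply: in_oN. Qed.

Lemma phi2_mulVmx {y} : \det y = 1 -> phi2 (invmx y) *m phi2 y = 1%:M.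
Proof. by move=> dy; rewrite lift0_mxM mulVmx ?lift0_mx1 // unitmxE dy unitr1. Qed.

Lemma phi2_mulmxV {y} : \det y = 1 -> phi2 y *m phi2 (invmx y) = 1%:M.
Proof. by move=> dy; rewrite lift0_mxM mulmxV ?lift0_mx1 // unitmxE dy unitr1. Qed.

Lemma diag3E i j k : diag3 i j k = mk3 i 0 0 0 j 0 0 0 k.
Proof. by apply/matrixP => r s; rewrite !mxE; case: (ord3P r) => ->; case: (ord3P s) => ->. Qed.

Lemma upper3E a b c : upper3 a b c = mk3 1 a b 0 1 c 0 0 1.
Proof. by apply/matrixP => r s; rewrite !mxE; case: (ord3P r) => ->; case: (ord3P s) => ->. Qed.

Lemma diag3_upper3_mul i j k a b c a' b' c' :
  diag3 i j k *m (upper3 a b c *m upper3 a' b' c') =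
  mk3 i (i * (a + a')) (i * (b' + a * c' + b)) 0 j (j * (c + c')) 0 0 k.
Proof. by rewrite diag3E !upper3E !mk3_mul; congr mk3; ring. Qed.

Lemma Gamma_inf3P g :
  Gamma_inf3 g <-> exists a b c, [/\ in_3o a, in_3o b, in_3o c & g = upper3 a b c].
Proof.
split=> [[[_ g1] [a [b [c gE]]]] | [a [b [c [ha hb hc ->]]]]].
  subst g; exists a, b, c; split=> //.
  - by have := g1 i0 i1; rewrite !mxE /= subr0.
  - by have := g1 i0 i2; rewrite !mxE /= subr0.
  - by have := g1 i1 i2; rewrite !mxE /= subr0.
split; last by exists a, b, c.
split; first split.
- by rewrite upper3E; apply: o_mx_mk3 => //; exact: in_3o_o.
- by rewrite upper3E det_mk3; ring.
have h0 : in_3o 0 by exists 0; rewrite mulr0.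
move=> r s; rewrite !mxE; case: (ord3P r) => ->; case: (ord3P s) => -> /=.
all: by rewrite ?subrr ?subr0.
Qed.

Lemma upper_unitriangular_decomp {x0 x01 x02 x1 x12 x2} :
  in_o x0 -> in_o x01 -> in_o x02 -> in_o x1 -> in_o x12 -> in_o x2 -> x0 * x1 * x2 = 1 ->
  exists d u g, [/\ D3 d, U3 u, Gamma_inf3 g & mk3 x0 x01 x02 0 x1 x12 0 0 x2 = d *m u *m g].
Proof.
move=> h0 h01 h02 h1 h12 h2 x012.
have [rep3o rep3P] := rep3_is_rep_mod.
have [a [ra [[k1 [hk1 e1]] _]]] := rep3P _ (in_oM h01 (in_oM h1 h2)).
have [c [rc [[k3 [hk3 e3]] _]]] := rep3P _ (in_oM h12 (in_oM h0 h2)).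
have [b [rb [[k2 [hk2 e2]] _]]] :=
  rep3P _ (in_oB (in_oM h02 (in_oM h1 h2)) (in_oM (rep3o a ra) (in_oM (in_o_nat 3) hk3))).
exists (diag3 x0 x1 x2), (upper3 a b c), (upper3 (3 * k1) (3 * k2) (3 * k3)); split.
- by exists x0, x1, x2.
- by exists a, b, c.
- apply/Gamma_inf3P; exists (3 * k1), (3 * k2), (3 * k3).
  by split; [exists k1 | exists k2 | exists k3 |].
rewrite -mulmxA diag3_upper3_mul (mulrC 3 k1) (mulrC 3 k2) -e1 -e2 (mulrC 3 k3) -e3.
by congr mk3; first [ring | rewrite -[LHS]mulr1 -x012; ring].
Qed.

Lemma diag_unipotent_unique {d u g d' u' g'} :
  D3 d -> U3 u -> Gamma_inf3 g -> D3 d' -> U3 u' -> Gamma_inf3 g' ->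
  d *m u *m g = d' *m u' *m g' -> d = d' /\ u = u'.
Proof.
move=> [i [j [k [hi hj hk ijk ->]]]] [a [b [c [ra rb rc ->]]]].
move=> /Gamma_inf3P [g1 [g2 [g3 [h1 h2 h3 ->]]]].
move=> [i' [j' [k' [_ _ _ _ ->]]]] [a' [b' [c' [ra' rb' rc' ->]]]].
move=> /Gamma_inf3P [g1' [g2' [g3' [h1' h2' h3' ->]]]].
rewrite -!mulmxA !diag3_upper3_mul => /mk3_inj [<- e01 e02 _ [<- e12 _ _ <-]].
have [/unit_o_neq0 ni /unit_o_neq0 nj _] := unit_o_prod3 hi hj hk ijk.
have ea : a = a' := rep3_eq ra ra' h1 h1' (mulfI ni e01).
subst a'.
have ec : c = c' := rep3_eq rc rc' h3 h3' (mulfI nj e12).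
have eb : b = b'.
  apply: (rep3_eq rb rb' (in_3oD h2 (in_3oMl (rep3_o ra) h3))
                         (in_3oD h2' (in_3oMl (rep3_o ra) h3'))).
  by rewrite addrC [b' + _]addrC (mulfI ni e02).
by rewrite ec eb.
Qed.

Definition unimodular (p q : algC) := exists s t, [/\ in_o s, in_o t & s * p + t * q = 1].

Lemma Yset_SL {Crep Arep y} : Yset Crep Arep y -> SL_o y.
Proof.
case=> [[] // | ->]; split; last exact: det1.
by move=> r s; rewrite mxE; case: (r == s).
Qed.

Lemma Delta2_unimodular {A} : Delta2 A -> unimodular (A i1 i1) (A i2 i1).
Proof.
move=> [[Ao detA] [A10 A20]].
exists (A i0 i0 * A i2 i2), (- (A i0 i0 * A i1 i2)); split; [exact: in_oM | exact/in_oN/in_oM |].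
by rewrite -detA [in RHS](mk3_eta A) det_mk3 A10 A20; ring.
Qed.

Lemma Delta2_coset_of_phi2 {A y} : Delta2 A -> SL_o y -> (phi2 y *m A) i2 i1 = 0 ->
  exists d u g, [/\ D3 d, U3 u, Gamma_inf3 g & A = phi2 (invmx y) *m d *m u *m g].
Proof.
move=> [[Ao detA] [A10 A20]] [yo dy] X21.
set X := phi2 y *m A.
have Xo : o_mx X := o_mx_mulmx (o_mx_phi2 yo) Ao.
have [X10 X20] : X i1 i0 = 0 /\ X i2 i0 = 0.
  by rewrite /X /phi2 [A]mk3_eta lift0_mx_mulmx_mk3 !mxE /= A10 A20 !mulr0 !addr0.
have XE : X = mk3 (X i0 i0) (X i0 i1) (X i0 i2) 0 (X i1 i1) (X i1 i2) 0 0 (X i2 i2).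
  by rewrite {1}[X]mk3_eta X10 X20 X21.
have detX : \det X = 1 by rewrite det_mulmx /phi2 det_lift0_mx dy detA mulr1.
have x012 : X i0 i0 * X i1 i1 * X i2 i2 = 1 by rewrite -detX [in RHS]XE det_mk3; ring.
have [d [u [g [hd hu hg Xfact]]]] :=
  upper_unitriangular_decomp (Xo i0 i0) (Xo i0 i1) (Xo i0 i2) (Xo i1 i1) (Xo i1 i2) (Xo i2 i2) x012.
exists d, u, g; split=> //.
by rewrite -(mul1mx A) -(phi2_mulVmx dy) -mulmxA -/X XE Xfact !mulmxA.
Qed.

Lemma Delta2_phi2_coset {y d u g} : SL_o y -> D3 d -> U3 u -> Gamma_inf3 g ->
  Delta2 (phi2 (invmx y) *m d *m u *m g).
Proof.
move=> hy [i [j [k [hi hj hk ijk ->]]]] [a [b [c [ra rb rc ->]]]] hg.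
have [[[go dg] _] _] := hg.
have [g1 [g2 [g3 [_ _ _ gE]]]] := (Gamma_inf3P g).1 hg.
split; first split.
- apply: o_mx_mulmx go; apply: o_mx_mulmx (o_mx_mulmx (o_mx_phi2 (o_mx_invmx hy)) _) _.
    by rewrite diag3E; apply: o_mx_mk3.
  by rewrite upper3E; apply: o_mx_mk3 => //; apply: rep3_o.
- rewrite !det_mulmx dg /phi2 det_lift0_mx det_inv (proj2 hy) invr1 diag3E upper3E !det_mk3.
  by rewrite -[RHS]ijk; ring.
- by rewrite gE -!mulmxA diag3_upper3_mul /phi2 lift0_mx_mulmx_mk3 !mxE /= !mulr0 !addr0; split.
Qed.

Lemma phi2_coset_col1 {y d u g} : \det y = 1 -> D3 d -> U3 u -> Gamma_inf3 g ->
  exists2 v, unit_o v &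
    ((phi2 (invmx y) *m d *m u *m g) i1 i1 = y j1 j1 * v /\
     (phi2 (invmx y) *m d *m u *m g) i2 i1 = - (y j1 j0 * v)).
Proof.
move=> dy [i [j [k [hi hj hk ijk ->]]]] [a [b [c [_ _ _ ->]]]].
move=> /Gamma_inf3P [g1 [g2 [g3 [_ _ _ ->]]]].
have [_ uj _] := unit_o_prod3 hi hj hk ijk.
exists j => //.
by rewrite -!mulmxA diag3_upper3_mul invmx_SL2 // /phi2 lift0_mx_mulmx_mk3 !mxE /=; split; ring.
Qed.

Section RepresentativesY.
Variables (Crep : algC -> Prop) (Arep : algC -> algC -> Prop).
Hypothesis hC : is_rep_nonzero_mod_units Crep.
Hypothesis hA : forall c, Crep c -> is_rep_mod c (Arep c).

Lemma Yset_of_bottom_row {c d} : Crep c -> in_o d -> unimodular c d ->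
  exists y, [/\ Yset Crep Arep y, y j1 j0 = c & y j1 j1 = d].
Proof.
move=> hc hd [s [t [hs ht st1]]].
have [co _] := hC.1 c hc.
have [ao rep] := hA _ hc.
have [a [ha [[k [hk ek]] _]]] := rep t ht.
exists (mk2 a (- s - k * d) c d); rewrite !mxE /=; split=> //; left.
split; last by rewrite !mxE.
split; first by apply: o_mx_mk2 => //; [exact: ao | exact: in_oB (in_oN hs) (in_oM hk hd)].
by rewrite det_mk2 -st1 (_ : a = t - k * c); [ring | rewrite -ek; ring].
Qed.

Lemma Yset_orthogonal {p q} : in_o p -> in_o q -> unimodular p q ->
  exists y, Yset Crep Arep y /\ y j1 j0 * p + y j1 j1 * q = 0.
Proof.
move=> hp hq [s [t [hs ht st1]]].
have [-> | q0] := eqVneq q 0.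
  by exists 1%:M; split; [right | rewrite !mxE /= mul0r mulr0 addr0].
have [c [hc [[w [[hw [w' [hw' ww']]] qwc]] _]]] := hC.2 q hq q0.
have hc_unimod : unimodular c (- p * w').
  exists (t * w), (- s * w); split; [exact: in_oM | exact: in_oM (in_oN hs) hw |].
  by rewrite -st1 qwc -[s * p]mulr1 -ww'; ring.
have [y [hy yc yd]] := Yset_of_bottom_row hc (in_oM (in_oN hp) hw') hc_unimod.
by exists y; split=> //; rewrite yc yd qwc -[c * p]mulr1 -ww'; ring.
Qed.

Lemma Yset_eq_of_assoc {y y' v v'} : Yset Crep Arep y -> Yset Crep Arep y' ->
  unit_o v -> unit_o v' ->
  y j1 j0 * v = y' j1 j0 * v' -> y j1 j1 * v = y' j1 j1 * v' -> y = y'.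
Proof.
move=> hy hy' hv hv'.
case: hy => [[[yo dy] [hc ha]] | ->]; case: hy' => [[[y'o dy'] [hc' ha']] | ->] e10 e11.
- have [_ c0] := hC.1 _ hc.
  have ec : y j1 j0 = y' j1 j0.
    by apply: (is_rep_nonzero_mod_units_eq hC hc hc' hv hv'); rewrite mulrC e10 mulrC.
  have ev : v = v' by apply: (mulfI c0); rewrite e10 ec.
  have ed : y j1 j1 = y' j1 j1 by apply: (mulIf (unit_o_neq0 hv)); rewrite e11 ev.
  have ea : y j0 j0 = y' j0 j0.
    apply: (is_rep_mod_eq (hA _ hc) ha); first by rewrite ec.
    exists (y' j0 j0 * y j0 j1 - y j0 j0 * y' j0 j1); split.
      exact: in_oB (in_oM (y'o _ _) (yo _ _)) (in_oM (yo _ _) (y'o _ _)).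
    exact: SL2_topleft_congr dy dy' ec ed.
  exact: SL2_eq dy dy' c0 ea ec ed.
- have [_ c0] := hC.1 _ hc.
  move: e10; rewrite mxE /= mul0r => /eqP.
  by rewrite mulf_eq0 (negbTE c0) (negbTE (unit_o_neq0 hv)).
- have [_ c0] := hC.1 _ hc'.
  move: e10; rewrite mxE /= mul0r => /esym/eqP.
  by rewrite mulf_eq0 (negbTE c0) (negbTE (unit_o_neq0 hv')).
- by [].
Qed.

Lemma Delta2_coset_decomp A : Delta2 A ->
  exists y d u g, [/\ Yset Crep Arep y, D3 d, U3 u, Gamma_inf3 g &
                     A = phi2 (invmx y) *m d *m u *m g].
Proof.
move=> hA2; have [[Ao _] _] := hA2.
have [y [hy y_orth]] := Yset_orthogonal (Ao i1 i1) (Ao i2 i1) (Delta2_unimodular hA2).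
have [|d [u [g [hd hu hg ->]]]] := Delta2_coset_of_phi2 hA2 (Yset_SL hy).
  by rewrite /phi2 [A]mk3_eta lift0_mx_mulmx_mk3 !mxE.
by exists y, d, u, g.
Qed.

Lemma phi2_coset_unique y d u g y' d' u' g' :
  Yset Crep Arep y -> D3 d -> U3 u -> Gamma_inf3 g ->
  Yset Crep Arep y' -> D3 d' -> U3 u' -> Gamma_inf3 g' ->
  phi2 (invmx y) *m d *m u *m g = phi2 (invmx y') *m d' *m u' *m g' ->
  [/\ y = y', d = d' & u = u'].
Proof.
move=> hy hd hu hg hy' hd' hu' hg' E.
have [_ dy] := Yset_SL hy; have [_ dy'] := Yset_SL hy'.
have [v hv [c1 c2]] := phi2_coset_col1 dy hd hu hg.
have [v' hv' [c1' c2']] := phi2_coset_col1 dy' hd' hu' hg'.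
have ey : y = y'.
  apply: (Yset_eq_of_assoc hy hy' hv hv'); last by rewrite -c1 -c1' E.
  by apply: oppr_inj; rewrite -c2 -c2' E.
subst y'.
have := congr1 (mulmx (phi2 y)) E; rewrite !mulmxA phi2_mulmxV // !mul1mx => E1.
by have [-> ->] := diag_unipotent_unique hd hu hg hd' hu' hg' E1.
Qed.

End RepresentativesY.

Theorem theorem2p14 (Crep : algC -> Prop) (Arep : algC -> algC -> Prop)
  (hC : is_rep_nonzero_mod_units Crep)
  (hA : forall c, Crep c -> is_rep_mod c (Arep c)) :
  (forall A : 'M[algC]_3,
     Delta2 A <->
     exists y d u g, [/\ Yset Crep Arep y, D3 d, U3 u, Gamma_inf3 g &
                        A = phi2 (invmx y) *m d *m u *m g]) /\
  (forall y d u g y' d' u' g',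
     Yset Crep Arep y -> D3 d -> U3 u -> Gamma_inf3 g ->
     Yset Crep Arep y' -> D3 d' -> U3 u' -> Gamma_inf3 g' ->
     phi2 (invmx y) *m d *m u *m g = phi2 (invmx y') *m d' *m u' *m g' ->
     [/\ y = y', d = d' & u = u']).
Proof.
split=> [A|]; last exact: phi2_coset_unique.
split=> [|[y [d [u [g [hy hd hu hg ->]]]]]]; first exact: Delta2_coset_decomp.
exact: Delta2_phi2_coset (Yset_SL hy) hd hu hg.
Qed.
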